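(* Consider the reciprocal recommendation model described in the context. If a recommendation policy $(\mathbf{A}^*,\mathbf{B}^* )$ is socially optimal, i.e. it maximizes $\mathrm{SW}(\mathbf{A},\mathbf{B})$ over all recommendation policies $(\mathbf{A},\mathbf{B})$, then $(\mathbf{A}^*,\mathbf{B}^* )$ is mutually Pareto optimal.
   Context: Let $n,m$ be positive integers, with left-side agents $a_1,\dots,a_n$ and right-side agents $b_1,\dots,b_m$. For each pair $(i,j)\in[n]\times[m]$ we are given $\hat p_1(i,j)\in[0,1]$ and $\hat p_2(j,i)\in[0,1]$, and we set $p_{ij}=\hat p_1(i,j)\hat p_2(j,i)$. Let $e:\{1,2,\dots\}\to[0,\infty)$ be a non-increasing examination function and set $e_{k\ell}=e(k)e(\ell)$. A recommendation policy is a pair $(\mathbf{A},\mathbf{B})$ with $\mathbf{A}=(A_1,\dots,A_n)$, each $A_i\in\mathbb{R}_{\ge0}^{m\times m}$ doubly stochastic (all row and column sums equal $1$), and $\mathbf{B}=(B_1,\dots,B_m)$, each $B_j\in\mathbb{R}_{\ge0}^{n\times n}$ doubly stochastic. The utilities are $U_i(\mathbf{A},\mathbf{B})=\sum_{j=1}^m p_{ij}\sum_{k=1}^m\sum_{\ell=1}^n e_{k\ell}A_i(j,k)B_j(i,\ell)$ for $i\in[n]$ and $V_j(\mathbf{A},\mathbf{B})=\sum_{i=1}^n p_{ij}\sum_{k=1}^m\sum_{\ell=1}^n e_{k\ell}A_i(j,k)B_j(i,\ell)$ for $j\in[m]$. The social welfare is $\mathrm{SW}(\mathbf{A},\mathbf{B})=\sum_{i=1}^n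 U_i(\mathbf{A},\mathbf{B})=\sum_{j=1}^m V_j(\mathbf{A},\mathbf{B})$. Pareto optimality: given $\mathbf{A}$, $\mathbf{B}$ is Pareto dominated for the left side by $\mathbf{B}'$ (another tuple of $n\times n$ doubly stochastic matrices) if $U_i(\mathbf{A},\mathbf{B}')\ge U_i(\mathbf{A},\mathbf{B})$ for all $i\in[n]$ with strict inequality for at least one $i$; $\mathbf{B}$ is Pareto optimal for the left side given $\mathbf{A}$ if no such $\mathbf{B}'$ exists. Analogously, given $\mathbf{B}$, $\mathbf{A}$ is Pareto optimal for the right side if there is no tuple $\mathbf{A}'$ of $m\times m$ doubly stochastic matrices with $V_j(\mathbf{A}',\mathbf{B})\ge V_j(\mathbf{A},\mathbf{B})$ for all $j\in[m]$, strictly for some $j$. A policy $(\mathbf{A},\mathbf{B})$ is mutually Pareto optimal if $\mathbf{A}$ is Pareto optimal given $\mathbf{B}$ and $\mathbf{B}$ is Pareto optimal given $\mathbf{A}$. *)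

From mathcomp Require Import all_boot all_order all_algebra.
Set Implicit Arguments. Unset Strict Implicit. Unset Printing Implicit Defensive.
Import Order.TTheory GRing.Theory Num.Theory.
Local Open Scope ring_scope.

(* Positions are 1-based in the paper; position k : 'I_m below is paper position k+1. *)

Definition doubly_stochastic (R : numDomainType) (k : nat) (M : 'M[R]_k) : Prop :=
  (forall i j, 0 <= M i j) /\
  (forall i, \sum_j M i j = 1) /\
  (forall j, \sum_i M i j = 1).

Definition examination (R : numDomainType) (e : nat -> R) : Prop :=
  (forall k, (0 < k)%N -> 0 <= e k) /\
  (forall k l, (0 < k)%N -> (k <= l)%N -> e l <= e k).

Section Model.
Variables (R : numDomainType) (n m : nat).
Variables (p1 : 'I_n -> 'I_m -> R) (p2 : 'I_m -> 'I_n -> R) (e : nat -> R).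

Definition pmatch (i : 'I_n) (j : 'I_m) : R := p1 i j * p2 j i.

Definition eprod (k l : nat) : R := e k.+1 * e l.+1.

Definition pair_term (A : 'I_n -> 'M[R]_m) (B : 'I_m -> 'M[R]_n)
  (i : 'I_n) (j : 'I_m) : R :=
  pmatch i j * \sum_(k < m) \sum_(l < n) eprod k l * A i j k * B j i l.

Definition U (A : 'I_n -> 'M[R]_m) (B : 'I_m -> 'M[R]_n) (i : 'I_n) : R :=
  \sum_(j < m) pair_term A B i j.

Definition V (A : 'I_n -> 'M[R]_m) (B : 'I_m -> 'M[R]_n) (j : 'I_m) : R :=
  \sum_(i < n) pair_term A B i j.

Definition SW (A : 'I_n -> 'M[R]_m) (B : 'I_m -> 'M[R]_n) : R :=
  \sum_(i < n) U A B i.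

Definition policyA (A : 'I_n -> 'M[R]_m) : Prop :=
  forall i, doubly_stochastic (A i).
Definition policyB (B : 'I_m -> 'M[R]_n) : Prop :=
  forall j, doubly_stochastic (B j).

Definition pareto_dominated_left (A : 'I_n -> 'M[R]_m) (B B' : 'I_m -> 'M[R]_n) : Prop :=
  (forall i, U A B i <= U A B' i) /\ (exists i, U A B i < U A B' i).

Definition pareto_optimal_left (A : 'I_n -> 'M[R]_m) (B : 'I_m -> 'M[R]_n) : Prop :=
  ~ exists B', policyB B' /\ pareto_dominated_left A B B'.

Definition pareto_dominated_right (B : 'I_m -> 'M[R]_n) (A A' : 'I_n -> 'M[R]_m) : Prop :=
  (forall j, V A B j <= V A' B j) /\ (exists j, V A B j < V A' B j).

Definition pareto_optimal_right (A : 'I_n -> 'M[R]_m) (B : 'I_m -> 'M[R]_n) : Prop :=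
  ~ exists A', policyA A' /\ pareto_dominated_right B A A'.

Definition mutually_pareto_optimal (A : 'I_n -> 'M[R]_m) (B : 'I_m -> 'M[R]_n) : Prop :=
  pareto_optimal_right A B /\ pareto_optimal_left A B.

Definition socially_optimal (A : 'I_n -> 'M[R]_m) (B : 'I_m -> 'M[R]_n) : Prop :=
  policyA A /\ policyB B /\
  forall A' B', policyA A' -> policyB B' -> SW A' B' <= SW A B.

End Model.

From mathcomp Require Import all_boot all_order all_algebra.
Set Implicit Arguments. Unset Strict Implicit. Unset Printing Implicit Defensive.
Import Order.TTheory GRing.Theory Num.Theory.
Local Open Scope ring_scope.

(* Social welfare is both the sum of the left utilities U_i and the sum of the
   right utilities V_j.  A Pareto improvement for either side, the other side's
   policy being fixed, therefore strictly increases social welfare, which a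
   socially optimal policy forbids.  No assumption on the match
   probabilities or on the examination function is needed. *)

Lemma ltr_sum_le_lt (R : numDomainType) (I : finType) (F G : I -> R) (i0 : I) :
  (forall i, F i <= G i) -> F i0 < G i0 -> \sum_i F i < \sum_i G i.
Proof.
move=> leFG ltFG0; rewrite (bigD1 i0) //= [ltRHS](bigD1 i0) //=.
by rewrite ltr_leD // ler_sum.
Qed.

Section Welfare.
Variables (R : numDomainType) (n m : nat).
Variables (p1 : 'I_n -> 'I_m -> R) (p2 : 'I_m -> 'I_n -> R) (e : nat -> R).

Lemma SW_sumV (A : 'I_n -> 'M[R]_m) (B : 'I_m -> 'M[R]_n) :
  SW p1 p2 e A B = \sum_j V p1 p2 e A B j.
Proof. exact: exchange_big. Qed.

Lemma pareto_dominated_left_SW_lt (A : 'I_n -> 'M[R]_m) (B B' : 'I_m -> 'M[R]_n) :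
  pareto_dominated_left p1 p2 e A B B' -> SW p1 p2 e A B < SW p1 p2 e A B'.
Proof. by case=> leU [i ltU]; exact: ltr_sum_le_lt ltU. Qed.

Lemma pareto_dominated_right_SW_lt (A A' : 'I_n -> 'M[R]_m) (B : 'I_m -> 'M[R]_n) :
  pareto_dominated_right p1 p2 e B A A' -> SW p1 p2 e A B < SW p1 p2 e A' B.
Proof. by case=> leV [j ltV]; rewrite !SW_sumV; exact: ltr_sum_le_lt ltV. Qed.

End Welfare.

Theorem proposition3p5 (R : realFieldType) (n m : nat)
  (p1 : 'I_n -> 'I_m -> R) (p2 : 'I_m -> 'I_n -> R) (e : nat -> R)
  (A : 'I_n -> 'M[R]_m) (B : 'I_m -> 'M[R]_n) :
  (0 < n)%N -> (0 < m)%N ->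
  (forall i j, 0 <= p1 i j <= 1) ->
  (forall j i, 0 <= p2 j i <= 1) ->
  examination e ->
  socially_optimal p1 p2 e A B ->
  mutually_pareto_optimal p1 p2 e A B.
Proof.
move=> _ _ _ _ _ [polA [polB SW_max]]; split.
- move=> [A' [polA' domA']].
  by have := pareto_dominated_right_SW_lt domA'; rewrite ltNge SW_max.
- move=> [B' [polB' domB']].
  by have := pareto_dominated_left_SW_lt domB'; rewrite ltNge SW_max.
Qed.
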